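(* For every $\widetilde r\in\mathbb{N}$ and $r_0\in\{0,\dots,b-1\}$, \[\mathrm{Var}(\mu^{(b\widetilde r+r_0)})=\frac{b-r_0}{b}\mathrm{Var}(\mu^{(\widetilde r)})+\frac{r_0}{b}\mathrm{Var}(\mu^{(\widetilde r+1)})+r_0(b-r_0).\]
   Context: Fix an integer $b\ge2$. For $n\in\mathbb{N}$ with base-$b$ digits $n_k$, $s(n):=\sum_kn_k$. For $r,n\in\mathbb{N}$, $\Delta^{(r)}(n):=s(n+r)-s(n)$, and $\mu^{(r)}(d):=\lim_{N\to\infty}\frac1N|\{n<N:\Delta^{(r)}(n)=d\}|$ for $d\in\mathbb{Z}$; these limits exist and $\mu^{(r)}$ is a probability measure on $\mathbb{Z}$ with finite moments and mean zero. $\mathrm{Var}(\mu^{(r)})$ is its variance. *)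

From Stdlib Require Import Reals ZArith Arith List Lia.
From Coquelicot Require Import Coquelicot.
Open Scope R_scope.

(* Base-b digit sum, by recursion with fuel (fuel n suffices for b >= 2). *)
Fixpoint digsum_aux (fuel b n : nat) : nat :=
  match fuel with
  | O => O
  | S f => (n mod b + digsum_aux f b (n / b))%nat
  end.

Definition digsum (b n : nat) : nat := digsum_aux n b n.

Definition Delta (b r n : nat) : Z :=
  (Z.of_nat (digsum b (n + r)) - Z.of_nat (digsum b n))%Z.

Definition count_eq (b r : nat) (d : Z) (N : nat) : nat :=
  length (filter (fun n => Z.eqb (Delta b r n) d) (seq 0 N)).

Definition mu (b r : nat) (d : Z) : R :=
  real (Lim_seq (fun N => INR (count_eq b r d N) / INR N)).

Definition sumZ (f : Z -> R) : R :=
  Series (fun k => f (Z.of_nat k)) + Series (fun k => f (- Z.of_nat (S k))%Z).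

Definition mean_mu (b r : nat) : R := sumZ (fun d => IZR d * mu b r d).

Definition Var_mu (b r : nat) : R :=
  sumZ (fun d => (IZR d - mean_mu b r) ^ 2 * mu b r d).

(* Write n = b m + n0 and r = b rt + r0 with n0, r0 < b. Adding r to n carries out of the last
   digit iff n0 >= b - r0, so Delta^(r)(n) is r0 + Delta^(rt)(m) for b - r0 residues n0 and
   r0 - b + Delta^(rt+1)(m) for the other r0. Counting in blocks of b, mu^(r) is therefore the
   mixture (b - r0)/b mu^(rt)(. - r0) + r0/b mu^(rt+1)(. - r0 + b). Translations and mixtures
   transform the first three moments by explicit formulas, so once every mu^(r) is known to have
   mass 1, mean 0 and summable second moment (by strong induction on r, mu^(1) being the fixed
   point of its own mixture equation and having a geometric left tail), the variance identity is
   that of a two-point mixture of shifts, whose between-component part is r0 (b - r0). *)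

From Pilot Require Import Defs.
From Stdlib Require Import Reals ZArith Arith Bool List Lia Lra.
From Coquelicot Require Import Coquelicot.
Open Scope R_scope.
Open Scope nat_scope.

Lemma digsum_aux_0 (fuel b : nat) : digsum_aux fuel b 0 = 0%nat.
Proof.
  induction fuel as [|fuel IH]; simpl; auto.
  now rewrite Nat.Div0.mod_0_l, Nat.Div0.div_0_l, IH.
Qed.

Lemma digsum_aux_fuel (b : nat) : (2 <= b)%nat -> forall f1 f2 n,
  (n <= f1)%nat -> (n <= f2)%nat -> digsum_aux f1 b n = digsum_aux f2 b n.
Proof.
  intros Hb f1; induction f1 as [|f1 IH]; intros f2 n H1 H2.
  - replace n with 0%nat by lia. now rewrite !digsum_aux_0.
  - destruct f2 as [|f2]; [replace n with 0%nat by lia; now rewrite !digsum_aux_0|].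
    destruct n as [|n]; [now rewrite !digsum_aux_0|].
    assert (Hdiv : (S n / b < S n)%nat) by (apply Nat.div_lt; lia).
    simpl; f_equal; apply IH; lia.
Qed.

Lemma digsum_digit (b m n0 : nat) : (2 <= b)%nat -> (n0 < b)%nat ->
  digsum b (b * m + n0) = (n0 + digsum b m)%nat.
Proof.
  intros Hb Hn0; unfold digsum.
  assert (Hdiv : ((b * m + n0) / b = m)%nat) by (symmetry; apply Nat.div_unique with n0; lia).
  assert (Hmod : ((b * m + n0) mod b = n0)%nat) by (symmetry; apply Nat.mod_unique with m; lia).
  destruct (b * m + n0)%nat as [|f] eqn:E.
  - rewrite <- Hdiv, <- Hmod, Nat.Div0.div_0_l, Nat.Div0.mod_0_l; reflexivity.
  - simpl digsum_aux at 1; rewrite Hdiv, Hmod; f_equal.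
    apply digsum_aux_fuel; nia.
Qed.

Lemma digsum_le (b n : nat) : (2 <= b)%nat -> (digsum b n <= n)%nat.
Proof.
  intros Hb; induction n as [n IH] using lt_wf_ind.
  destruct (Nat.eq_dec n 0) as [->|Hn]; [reflexivity|].
  rewrite (Nat.div_mod n b), digsum_digit by (try apply Nat.mod_upper_bound; lia).
  assert (Hdiv : (n / b < n)%nat) by (apply Nat.div_lt; lia).
  specialize (IH _ Hdiv); nia.
Qed.

Lemma Delta_digit (b rt r0 m n0 : nat) : (2 <= b)%nat -> (n0 < b)%nat -> (r0 < b)%nat ->
  Defs.Delta b (b * rt + r0) (b * m + n0) =
  if (n0 + r0 <? b)%nat then (Z.of_nat r0 + Defs.Delta b rt m)%Z
  else (Z.of_nat r0 - Z.of_nat b + Defs.Delta b (rt + 1) m)%Z.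
Proof.
  intros Hb Hn0 Hr0; unfold Defs.Delta.
  destruct (Nat.ltb_spec (n0 + r0) b).
  - replace (b * m + n0 + (b * rt + r0))%nat with (b * (m + rt) + (n0 + r0))%nat by ring.
    rewrite !digsum_digit by lia; lia.
  - replace (b * m + n0 + (b * rt + r0))%nat with (b * (m + (rt + 1)) + (n0 + r0 - b))%nat by nia.
    rewrite !digsum_digit by lia; lia.
Qed.

Lemma Delta_le (b : nat) : (2 <= b)%nat -> forall n r, (Defs.Delta b r n <= Z.of_nat r)%Z.
Proof.
  intros Hb n; induction n as [n IH] using lt_wf_ind; intros r.
  destruct (Nat.eq_dec n 0) as [->|Hn].
  - unfold Defs.Delta; pose proof (digsum_le b r Hb); simpl; lia.
  - assert (Hr : (r mod b < b)%nat) by (apply Nat.mod_upper_bound; lia).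
    assert (Hm : (n mod b < b)%nat) by (apply Nat.mod_upper_bound; lia).
    assert (Hdiv : (n / b < n)%nat) by (apply Nat.div_lt; lia).
    rewrite (Nat.div_mod n b), (Nat.div_mod r b), Delta_digit by lia.
    pose proof (IH _ Hdiv (r / b)%nat); pose proof (IH _ Hdiv (r / b + 1)%nat).
    destruct (n mod b + r mod b <? b)%nat; nia.
Qed.

Definition count_below (p : nat -> bool) (N : nat) : nat := length (filter p (seq 0 N)).

Lemma count_below_S p N : count_below p (S N) = (count_below p N + Nat.b2n (p N))%nat.
Proof.
  unfold count_below; rewrite seq_S, filter_app, length_app; simpl.
  destruct (p N); simpl; lia.
Qed.

Lemma count_below_le p N : (count_below p N <= N)%nat.
Proof. induction N; [reflexivity|]; rewrite count_below_S; destruct (p N); simpl; lia. Qed.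

Lemma count_below_ext p q N : (forall n, (n < N)%nat -> p n = q n) ->
  count_below p N = count_below q N.
Proof. induction N; intros H; auto; rewrite !count_below_S, H, IHN; auto. Qed.

Lemma count_below_const (c : bool) N : count_below (fun _ => c) N = (Nat.b2n c * N)%nat.
Proof.
  induction N; [now rewrite Nat.mul_0_r|]; rewrite count_below_S, IHN; destruct c; simpl; lia.
Qed.

Lemma count_below_add p N K :
  count_below p (N + K) = (count_below p N + count_below (fun i => p (N + i)%nat) K)%nat.
Proof.
  induction K; [rewrite Nat.add_0_r; symmetry; apply Nat.add_0_r|].
  rewrite Nat.add_succ_r, !count_below_S, IHK; lia.
Qed.

Lemma count_below_threshold k x y B :
  count_below (fun i => if (i <? k)%nat then x else y) B =
  (Nat.min k B * Nat.b2n x + (B - k) * Nat.b2n y)%nat.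
Proof.
  induction B; [rewrite Nat.min_0_r; reflexivity|].
  rewrite count_below_S, IHB; destruct (Nat.ltb_spec B k), x, y; cbn [Nat.b2n]; lia.
Qed.

Lemma count_below_blocks b k p q1 q2 : (k <= b)%nat ->
  (forall m n0, (n0 < b)%nat -> p (b * m + n0)%nat = if (n0 <? k)%nat then q1 m else q2 m) ->
  forall M, count_below p (b * M) = (k * count_below q1 M + (b - k) * count_below q2 M)%nat.
Proof.
  intros Hk Hp M; induction M; [rewrite !Nat.mul_0_r; reflexivity|].
  replace (b * S M)%nat with (b * M + b)%nat by ring.
  rewrite count_below_add, IHM, !count_below_S.
  rewrite (count_below_ext (fun i => p (b * M + i)) (fun i => if (i <? k)%nat then q1 M else q2 M))
    by auto.
  rewrite count_below_threshold; replace (Nat.min k b) with k by lia.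
  destruct (q1 M), (q2 M); cbn [Nat.b2n]; nia.
Qed.

Close Scope nat_scope.

Definition density (p : nat -> bool) (l : R) : Prop :=
  is_lim_seq (fun N => INR (count_below p N) / INR N) l.

Lemma is_lim_seq_inv_INR : is_lim_seq (fun N => / INR N) 0.
Proof.
  replace (Finite 0) with (Rbar_inv p_infty) by reflexivity.
  apply is_lim_seq_inv; [apply is_lim_seq_INR|discriminate].
Qed.

Lemma filterlim_div_nat (b : nat) : (1 <= b)%nat ->
  filterlim (fun N => (N / b)%nat) eventually eventually.
Proof.
  intros Hb P [N0 HN]; exists (N0 * b)%nat; intros n Hn.
  apply HN, Nat.div_le_lower_bound; lia.
Qed.

Lemma is_lim_seq_div_nat_ratio (b : nat) : (1 <= b)%nat ->
  is_lim_seq (fun N => INR (N / b) / INR N) (/ INR b).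
Proof.
  intros Hb.
  assert (Hbpos : 0 < INR b) by (apply lt_0_INR; lia).
  apply is_lim_seq_le_le_loc with (fun N => / INR b - / INR N) (fun N => / INR b).
  - exists 1%nat; intros N HN.
    assert (HNpos : 0 < INR N) by (apply lt_0_INR; lia).
    pose proof (Nat.div_mod N b ltac:(lia)); pose proof (Nat.mod_upper_bound N b ltac:(lia)).
    assert (Hlow : INR b * INR (N / b) <= INR N) by (rewrite <- mult_INR; apply le_INR; lia).
    assert (Hup : INR N <= INR b * INR (N / b) + INR b)
      by (rewrite <- mult_INR, <- plus_INR; apply le_INR; lia).
    set (q := INR (N / b)) in *.
    split; apply Rmult_le_reg_r with (INR b * INR N); try nra; unfold Rdiv;
      field_simplify; try lra; rewrite !Rdiv_1_r; nra.
  - replace (Finite (/ INR b)) with (Finite (/ INR b - 0)) by (f_equal; ring).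
    apply is_lim_seq_minus'; [apply is_lim_seq_const|apply is_lim_seq_inv_INR].
  - apply is_lim_seq_const.
Qed.

Lemma count_below_last_block_negligible (p : nat -> bool) (b : nat) : (1 <= b)%nat ->
  is_lim_seq (fun N => (INR (count_below p N) - INR (count_below p (b * (N / b)))) / INR N) 0.
Proof.
  intros Hb.
  apply is_lim_seq_le_le_loc with (fun _ => 0) (fun N => INR b * / INR N).
  - exists 1%nat; intros N HN.
    assert (HNpos : 0 < INR N) by (apply lt_0_INR; lia).
    pose proof (Nat.div_mod N b ltac:(lia)) as Hdm; pose proof (Nat.mod_upper_bound N b ltac:(lia)).
    pose proof (count_below_add p (b * (N / b)) (N mod b)) as Hadd; rewrite <- Hdm in Hadd.
    pose proof (count_below_le (fun i => p (b * (N / b) + i)%nat) (N mod b)).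
    assert (Hlow : INR (count_below p (b * (N / b))) <= INR (count_below p N))
      by (apply le_INR; lia).
    assert (Hup : INR (count_below p N) <= INR (count_below p (b * (N / b))) + INR b)
      by (rewrite <- plus_INR; apply le_INR; lia).
    split; [apply Rdiv_le_0_compat; lra|].
    apply Rmult_le_compat_r; [left; apply Rinv_0_lt_compat|]; lra.
  - apply is_lim_seq_const.
  - replace (Finite 0) with (Finite (INR b * 0)) by (f_equal; ring).
    apply is_lim_seq_mult'; [apply is_lim_seq_const|apply is_lim_seq_inv_INR].
Qed.

Lemma density_blocks (b k : nat) p q1 q2 (l1 l2 : R) : (1 <= b)%nat -> (k <= b)%nat ->
  (forall m n0, (n0 < b)%nat -> p (b * m + n0)%nat = if (n0 <? k)%nat then q1 m else q2 m) ->
  density q1 l1 -> density q2 l2 ->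
  density p ((INR k * l1 + INR (b - k) * l2) / INR b).
Proof.
  intros Hb Hk Hp H1 H2.
  assert (Hbpos : 0 < INR b) by (apply lt_0_INR; lia).
  set (V := fun M => INR k * (INR (count_below q1 M) / INR M)
                     + INR (b - k) * (INR (count_below q2 M) / INR M)).
  assert (HV : is_lim_seq (fun N => V (N / b)%nat) (INR k * l1 + INR (b - k) * l2)).
  { apply (is_lim_seq_subseq V _ _ (filterlim_div_nat b Hb)).
    apply is_lim_seq_plus'; apply is_lim_seq_mult'; auto; apply is_lim_seq_const. }
  apply is_lim_seq_ext_loc with
    (fun N => V (N / b)%nat * (INR (N / b) / INR N)
              + (INR (count_below p N) - INR (count_below p (b * (N / b)))) / INR N).
  - exists b; intros N HN.
    assert (HNpos : 0 < INR N) by (apply lt_0_INR; lia).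
    assert (Hq : 0 < INR (N / b)) by (apply lt_0_INR, Nat.div_str_pos; lia).
    unfold V; rewrite (count_below_blocks b k p q1 q2 Hk Hp (N / b)), plus_INR, !mult_INR.
    field; lra.
  - replace ((INR k * l1 + INR (b - k) * l2) / INR b)
      with ((INR k * l1 + INR (b - k) * l2) * / INR b + 0) by (field; lra).
    apply is_lim_seq_plus';
      [apply is_lim_seq_mult'; [exact HV|apply is_lim_seq_div_nat_ratio; exact Hb]|].
    apply count_below_last_block_negligible; exact Hb.
Qed.

Lemma density_ext p q l : (forall n, p n = q n) -> density q l -> density p l.
Proof.
  intros Hpq Hq; eapply is_lim_seq_ext; [|exact Hq].
  intros N; now rewrite (count_below_ext p q) by auto.
Qed.

Lemma density_const (c : bool) : density (fun _ => c) (if c then 1 else 0).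
Proof.
  apply is_lim_seq_ext_loc with (fun _ => if c then 1 else 0); [|apply is_lim_seq_const].
  exists 1%nat; intros N HN.
  assert (HNpos : 0 < INR N) by (apply lt_0_INR; lia).
  rewrite count_below_const, mult_INR; destruct c; simpl; field; lra.
Qed.

Definition Delta_eqb (b r : nat) (d : Z) (n : nat) : bool := Z.eqb (Defs.Delta b r n) d.

Lemma Delta_eqb_digit (b rt r0 : nat) (d : Z) : (2 <= b)%nat -> (r0 < b)%nat ->
  forall m n0, (n0 < b)%nat -> Delta_eqb b (b * rt + r0) d (b * m + n0) =
   if (n0 <? b - r0)%nat then Delta_eqb b rt (d - Z.of_nat r0) m
   else Delta_eqb b (rt + 1) (d - Z.of_nat r0 + Z.of_nat b) m.
Proof.
  intros Hb Hr0 m n0 Hn0; unfold Delta_eqb; rewrite Delta_digit by lia.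
  destruct (Nat.ltb_spec (n0 + r0) b), (Nat.ltb_spec n0 (b - r0)); try lia;
    apply eq_true_iff_eq; rewrite !Z.eqb_eq; lia.
Qed.

Lemma density_Delta_digit (b rt r0 : nat) (d : Z) (l1 l2 : R) : (2 <= b)%nat -> (r0 < b)%nat ->
  density (Delta_eqb b rt (d - Z.of_nat r0)) l1 ->
  density (Delta_eqb b (rt + 1) (d - Z.of_nat r0 + Z.of_nat b)) l2 ->
  density (Delta_eqb b (b * rt + r0) d) ((INR (b - r0) * l1 + INR r0 * l2) / INR b).
Proof.
  intros Hb Hr0 H1 H2.
  replace (INR r0) with (INR (b - (b - r0))) by (f_equal; lia).
  apply density_blocks with (q1 := Delta_eqb b rt (d - Z.of_nat r0))
    (q2 := Delta_eqb b (rt + 1) (d - Z.of_nat r0 + Z.of_nat b)); auto; try lia.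
  apply Delta_eqb_digit; lia.
Qed.

Lemma density_Delta_0 (b : nat) (d : Z) : density (Delta_eqb b 0 d) (if Z.eqb d 0 then 1 else 0).
Proof.
  apply density_ext with (fun _ => Z.eqb d 0); [|apply density_const].
  intros n; unfold Delta_eqb, Defs.Delta; rewrite Nat.add_0_r, Z.sub_diag.
  apply eq_true_iff_eq; rewrite !Z.eqb_eq; lia.
Qed.

Lemma density_Delta_gt (b r : nat) (d : Z) : (2 <= b)%nat -> (Z.of_nat r < d)%Z ->
  density (Delta_eqb b r d) 0.
Proof.
  intros Hb Hd; apply density_ext with (fun _ => false); [|apply density_const].
  intros n; apply Z.eqb_neq; pose proof (Delta_le b Hb n r); lia.
Qed.

(* Induction on a bound for [r - d], which the two recursive calls of [density_Delta_digit] lower by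
   [(b - 1) (r / b)] and [(b - 1) (r / b + 1)] respectively. *)
Lemma density_Delta_exists (b r : nat) (d : Z) : (2 <= b)%nat ->
  exists l, density (Delta_eqb b r d) l.
Proof.
  intros Hb.
  assert (Hk : forall k r d, (Z.of_nat r - d < Z.of_nat k)%Z ->
                 exists l, density (Delta_eqb b r d) l).
  2: { apply (Hk (Z.to_nat (Z.of_nat r - d + 1))); lia. }
  intros k; induction k as [|k IH]; intros r' d' Hrd.
  - exists 0; apply density_Delta_gt; lia.
  - destruct (Z_lt_le_dec (Z.of_nat r') d') as [Hgt|Hle]; [exists 0; apply density_Delta_gt; lia|].
    destruct (Nat.eq_dec r' 0) as [->|Hr']; [eexists; apply density_Delta_0|].
    assert (Hr0 : (r' mod b < b)%nat) by (apply Nat.mod_upper_bound; lia).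
    pose proof (Nat.div_mod r' b ltac:(lia)) as Hdm.
    destruct (IH (r' / b + 1)%nat (d' - Z.of_nat (r' mod b) + Z.of_nat b)%Z ltac:(nia)) as [l2 H2].
    assert (H1 : exists l, density (Delta_eqb b (r' / b) (d' - Z.of_nat (r' mod b))) l).
    { destruct (Nat.eq_dec (r' / b) 0) as [E|E]; [rewrite E; eexists; apply density_Delta_0|].
      apply IH; nia. }
    destruct H1 as [l1 H1].
    rewrite Hdm; eexists; apply density_Delta_digit; eauto.
Qed.

Lemma density_bounds p l : density p l -> 0 <= l <= 1.
Proof.
  intros Hl.
  assert (Hfrac : forall N, 0 <= INR (count_below p N) / INR N <= 1).
  { intros [|N]; [simpl; unfold Rdiv; rewrite Rmult_0_l; lra|].
    assert (0 < INR (S N)) by (apply lt_0_INR; lia).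
    pose proof (le_INR _ _ (count_below_le p (S N))); pose proof (pos_INR (count_below p (S N))).
    split; [apply Rdiv_le_0_compat; lra|].
    apply Rmult_le_reg_r with (INR (S N)); [lra|]; field_simplify; lra. }
  split.
  - change (Rbar_le 0 l); eapply is_lim_seq_le; [|apply is_lim_seq_const|exact Hl].
    intros; apply Hfrac.
  - change (Rbar_le l 1); eapply is_lim_seq_le; [|exact Hl|apply is_lim_seq_const].
    intros; apply Hfrac.
Qed.

Lemma mu_of_density b r d l : density (Delta_eqb b r d) l -> mu b r d = l.
Proof.
  intros H; unfold mu.
  now rewrite (is_lim_seq_unique (fun N => INR (count_eq b r d N) / INR N) l H).
Qed.

Lemma mu_density b r d : (2 <= b)%nat -> density (Delta_eqb b r d) (mu b r d).
Proof.
  intros Hb; destruct (density_Delta_exists b r d Hb) as [l H].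
  now rewrite (mu_of_density _ _ _ _ H).
Qed.

Lemma mu_bounds b r d : (2 <= b)%nat -> 0 <= mu b r d <= 1.
Proof. intros Hb; exact (density_bounds _ _ (mu_density b r d Hb)). Qed.

Lemma mu_0 b d : mu b 0 d = if Z.eqb d 0 then 1 else 0.
Proof. apply mu_of_density, density_Delta_0. Qed.

Lemma mu_gt b r d : (2 <= b)%nat -> (Z.of_nat r < d)%Z -> mu b r d = 0.
Proof. intros; apply mu_of_density, density_Delta_gt; auto. Qed.

Lemma mu_digit (b rt r0 : nat) (d : Z) : (2 <= b)%nat -> (r0 < b)%nat ->
  mu b (b * rt + r0) d =
  INR (b - r0) / INR b * mu b rt (d - Z.of_nat r0)
  + INR r0 / INR b * mu b (rt + 1) (d - (Z.of_nat r0 - Z.of_nat b)).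
Proof.
  intros Hb Hr0.
  assert (0 < INR b) by (apply lt_0_INR; lia).
  replace (d - (Z.of_nat r0 - Z.of_nat b))%Z with (d - Z.of_nat r0 + Z.of_nat b)%Z by lia.
  rewrite (mu_of_density _ _ _ _
             (density_Delta_digit b rt r0 d _ _ Hb Hr0 (mu_density _ _ _ Hb) (mu_density _ _ _ Hb))).
  field; lra.
Qed.

Definition ex_sumZ (f : Z -> R) : Prop :=
  ex_series (fun k => f (Z.of_nat k)) /\ ex_series (fun k => f (- Z.of_nat (S k))%Z).

Lemma ex_sumZ_ext f g : (forall d, f d = g d) -> ex_sumZ f -> ex_sumZ g.
Proof.
  intros H [Hp Hn]; split; [eapply ex_series_ext; [|exact Hp]|eapply ex_series_ext; [|exact Hn]];
    intros; apply H.
Qed.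

Lemma sumZ_ext f g : (forall d, f d = g d) -> sumZ f = sumZ g.
Proof. intros H; unfold sumZ; f_equal; apply Series_ext; intros; apply H. Qed.

Lemma ex_sumZ_plus f g : ex_sumZ f -> ex_sumZ g -> ex_sumZ (fun d => f d + g d).
Proof.
  intros [Hf1 Hf2] [Hg1 Hg2];
    split; [exact (ex_series_plus _ _ Hf1 Hg1)|exact (ex_series_plus _ _ Hf2 Hg2)].
Qed.

Lemma sumZ_plus f g : ex_sumZ f -> ex_sumZ g -> sumZ (fun d => f d + g d) = sumZ f + sumZ g.
Proof.
  intros [Hf1 Hf2] [Hg1 Hg2]; unfold sumZ.
  rewrite (Series_plus _ _ Hf1 Hg1), (Series_plus _ _ Hf2 Hg2); ring.
Qed.

Lemma ex_sumZ_scal c f : ex_sumZ f -> ex_sumZ (fun d => c * f d).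
Proof.
  intros [Hf1 Hf2]; split; [exact (ex_series_scal_l c _ Hf1)|exact (ex_series_scal_l c _ Hf2)].
Qed.

Lemma sumZ_scal c f : sumZ (fun d => c * f d) = c * sumZ f.
Proof. unfold sumZ; rewrite !Series_scal_l; ring. Qed.

Lemma sumZ_shift_pred f : ex_sumZ f ->
  ex_sumZ (fun d => f (d - 1)%Z) /\ sumZ (fun d => f (d - 1)%Z) = sumZ f.
Proof.
  intros [Hp Hn].
  assert (Hn' : ex_series (fun k => f (- Z.of_nat (S (S k)))%Z))
    by exact (proj1 (ex_series_incr_1 (fun k => f (- Z.of_nat (S k))%Z)) Hn).
  assert (Ep : forall k, f (Z.of_nat (S k) - 1)%Z = f (Z.of_nat k)) by (intros; f_equal; lia).
  assert (En : forall k, f (- Z.of_nat (S k) - 1)%Z = f (- Z.of_nat (S (S k)))%Z)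
    by (intros; f_equal; lia).
  assert (Hp' : ex_series (fun k => f (Z.of_nat k - 1)%Z)).
  { apply (ex_series_incr_1 (fun k => f (Z.of_nat k - 1)%Z)).
    eapply ex_series_ext; [|exact Hp]; intros; symmetry; apply Ep. }
  split; [split; [exact Hp'|eapply ex_series_ext; [|exact Hn']; intros; symmetry; apply En]|].
  unfold sumZ; rewrite (Series_incr_1 _ Hp'), (Series_incr_1 _ Hn).
  rewrite (Series_ext _ _ Ep), (Series_ext _ _ En).
  replace (Z.of_nat 0 - 1)%Z with (- Z.of_nat 1)%Z by reflexivity; ring.
Qed.

Lemma sumZ_shift_succ f : ex_sumZ f ->
  ex_sumZ (fun d => f (d + 1)%Z) /\ sumZ (fun d => f (d + 1)%Z) = sumZ f.
Proof.
  intros [Hp Hn].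
  assert (Hp' : ex_series (fun k => f (Z.of_nat (S k))))
    by exact (proj1 (ex_series_incr_1 (fun k => f (Z.of_nat k))) Hp).
  assert (Ep : forall k, f (Z.of_nat k + 1)%Z = f (Z.of_nat (S k))) by (intros; f_equal; lia).
  assert (En : forall k, f (- Z.of_nat (S (S k)) + 1)%Z = f (- Z.of_nat (S k))%Z)
    by (intros; f_equal; lia).
  assert (Hn' : ex_series (fun k => f (- Z.of_nat (S k) + 1)%Z)).
  { apply (ex_series_incr_1 (fun k => f (- Z.of_nat (S k) + 1)%Z)).
    eapply ex_series_ext; [|exact Hn]; intros; symmetry; apply En. }
  split; [split; [eapply ex_series_ext; [|exact Hp']; intros; symmetry; apply Ep|exact Hn']|].
  unfold sumZ; rewrite (Series_incr_1 _ Hp), (Series_incr_1 _ Hn').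
  rewrite (Series_ext _ _ Ep), (Series_ext _ _ En).
  replace (- Z.of_nat 1 + 1)%Z with (Z.of_nat 0) by reflexivity; ring.
Qed.

Lemma sumZ_shift (c : Z) f : ex_sumZ f ->
  ex_sumZ (fun d => f (d - c)%Z) /\ sumZ (fun d => f (d - c)%Z) = sumZ f.
Proof.
  intros Hf; induction c as [|c [IHex IHsum]|c [IHex IHsum]] using Z.peano_ind.
  - split; [eapply ex_sumZ_ext; [|exact Hf]|apply sumZ_ext]; intros; cbv beta; f_equal; lia.
  - destruct (sumZ_shift_pred _ IHex) as [Hex Hsum]; rewrite <- IHsum, <- Hsum.
    split; [eapply ex_sumZ_ext; [|exact Hex]|apply sumZ_ext]; intros; cbv beta; f_equal; lia.
  - destruct (sumZ_shift_succ _ IHex) as [Hex Hsum]; rewrite <- IHsum, <- Hsum.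
    split; [eapply ex_sumZ_ext; [|exact Hex]|apply sumZ_ext]; intros; cbv beta; f_equal; lia.
Qed.

Definition moment (k : nat) (F : Z -> R) (d : Z) : R := IZR d ^ k * F d.

Record has_moments (F : Z -> R) (m0 m1 m2 : R) : Prop := {
  ex_moment0 : ex_sumZ (moment 0 F);
  ex_moment1 : ex_sumZ (moment 1 F);
  ex_moment2 : ex_sumZ (moment 2 F);
  sumZ_moment0 : sumZ (moment 0 F) = m0;
  sumZ_moment1 : sumZ (moment 1 F) = m1;
  sumZ_moment2 : sumZ (moment 2 F) = m2 }.

Lemma has_moments_ext F G m0 m1 m2 : (forall d, F d = G d) ->
  has_moments G m0 m1 m2 -> has_moments F m0 m1 m2.
Proof.
  intros E [H0 H1 H2 S0 S1 S2].
  assert (Ek : forall k d, moment k G d = moment k F d) by (intros; unfold moment; now rewrite E).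
  constructor; try (eapply ex_sumZ_ext; [apply Ek|]; assumption);
    rewrite <- (sumZ_ext _ _ (Ek _)); assumption.
Qed.

Lemma has_moments_unique F m0 m1 m2 m0' m1' m2' :
  has_moments F m0 m1 m2 -> has_moments F m0' m1' m2' -> m0 = m0' /\ m1 = m1' /\ m2 = m2'.
Proof. intros [_ _ _ <- <- <-] [_ _ _ <- <- <-]; auto. Qed.

(* Moments of the translate [G (. - c)]: expand [(e + c) ^ k] at [e = d - c]. *)
Lemma has_moments_shift G c m0 m1 m2 : has_moments G m0 m1 m2 ->
  has_moments (fun d => G (d - c)%Z) m0 (m1 + IZR c * m0) (m2 + 2 * IZR c * m1 + IZR c ^ 2 * m0).
Proof.
  intros [H0 H1 H2 S0 S1 S2].
  set (h1 := fun e => moment 1 G e + IZR c * moment 0 G e).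
  set (h2 := fun e => moment 2 G e + 2 * IZR c * moment 1 G e + IZR c ^ 2 * moment 0 G e).
  assert (X1 : ex_sumZ h1) by (apply ex_sumZ_plus; auto; apply ex_sumZ_scal; auto).
  assert (X2 : ex_sumZ h2) by (repeat apply ex_sumZ_plus; auto; apply ex_sumZ_scal; auto).
  assert (T1 : sumZ h1 = m1 + IZR c * m0)
    by (unfold h1; rewrite sumZ_plus, sumZ_scal; auto; [congruence|apply ex_sumZ_scal; auto]).
  assert (T2 : sumZ h2 = m2 + 2 * IZR c * m1 + IZR c ^ 2 * m0).
  { unfold h2; rewrite !sumZ_plus, !sumZ_scal; try congruence;
      repeat apply ex_sumZ_plus; auto; apply ex_sumZ_scal; auto. }
  destruct (sumZ_shift c _ H0) as [B0 C0].
  destruct (sumZ_shift c _ X1) as [B1 C1].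
  destruct (sumZ_shift c _ X2) as [B2 C2].
  assert (E0 : forall d, moment 0 G (d - c) = moment 0 (fun d => G (d - c)%Z) d)
    by (intros; unfold moment; simpl; ring).
  assert (E1 : forall d, h1 (d - c)%Z = moment 1 (fun d => G (d - c)%Z) d)
    by (intros; unfold h1, moment; rewrite minus_IZR; simpl; ring).
  assert (E2 : forall d, h2 (d - c)%Z = moment 2 (fun d => G (d - c)%Z) d)
    by (intros; unfold h2, moment; rewrite minus_IZR; simpl; ring).
  constructor.
  - eapply ex_sumZ_ext; [exact E0|exact B0].
  - eapply ex_sumZ_ext; [exact E1|exact B1].
  - eapply ex_sumZ_ext; [exact E2|exact B2].
  - rewrite <- (sumZ_ext _ _ E0); congruence.
  - rewrite <- (sumZ_ext _ _ E1); congruence.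
  - rewrite <- (sumZ_ext _ _ E2); congruence.
Qed.

Lemma has_moments_mixture F G H a b c1 c2 g0 g1 g2 h0 h1 h2 :
  (forall d, F d = a * G (d - c1)%Z + b * H (d - c2)%Z) ->
  has_moments G g0 g1 g2 -> has_moments H h0 h1 h2 ->
  has_moments F (a * g0 + b * h0)
    (a * (g1 + IZR c1 * g0) + b * (h1 + IZR c2 * h0))
    (a * (g2 + 2 * IZR c1 * g1 + IZR c1 ^ 2 * g0) + b * (h2 + 2 * IZR c2 * h1 + IZR c2 ^ 2 * h0)).
Proof.
  intros E HG HH.
  destruct (has_moments_shift G c1 _ _ _ HG) as [A0 A1 A2 S0 S1 S2].
  destruct (has_moments_shift H c2 _ _ _ HH) as [B0 B1 B2 T0 T1 T2].
  assert (Ek : forall k d, a * moment k (fun d => G (d - c1)%Z) d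
                           + b * moment k (fun d => H (d - c2)%Z) d = moment k F d)
    by (intros; unfold moment; rewrite E; ring).
  constructor;
    try (eapply ex_sumZ_ext; [apply Ek|]; apply ex_sumZ_plus; apply ex_sumZ_scal; assumption);
    rewrite <- (sumZ_ext _ _ (Ek _)), sumZ_plus, !sumZ_scal by (apply ex_sumZ_scal; assumption);
    congruence.
Qed.

Lemma ex_series_sq_geometric x : 0 < x < 1 -> ex_series (fun k => (INR k + 1) ^ 2 * x ^ k).
Proof.
  intros Hx.
  assert (Hpos : forall k, 0 < (INR k + 1) ^ 2 * x ^ k).
  { intros k; apply Rmult_lt_0_compat; [pose proof (pos_INR k); nra|apply pow_lt; lra]. }
  assert (Hinv : is_lim_seq (fun n => / INR (S n)) 0)
    by exact (proj1 (is_lim_seq_incr_1 (fun n => / INR n) 0) is_lim_seq_inv_INR).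
  eapply ex_series_ext.
  2: { apply (ex_series_DAlembert (fun k => (INR k + 1) ^ 2 * x ^ k) x);
         [lra|intros n; pose proof (Hpos n); lra|].
       apply is_lim_seq_ext with (fun n => (1 + / INR (S n)) * (1 + / INR (S n)) * x).
       - intros n; rewrite Rabs_pos_eq by (apply Rlt_le, Rdiv_lt_0_compat; auto).
         rewrite S_INR; simpl; pose proof (pos_INR n).
         field; split; [apply pow_nonzero|]; lra.
       - replace (Finite x) with (Finite ((1 + 0) * (1 + 0) * x)) by (f_equal; ring).
         apply is_lim_seq_mult'; [apply is_lim_seq_mult'|apply is_lim_seq_const];
           apply is_lim_seq_plus'; auto; apply is_lim_seq_const. }
  intros n; apply Rabs_pos_eq, Rlt_le, Hpos.
Qed.

Lemma ex_sumZ_dominated f C x : 0 < x < 1 ->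
  (forall k, Rabs (f (Z.of_nat k)) <= C * ((INR k + 1) ^ 2 * x ^ k)) ->
  (forall k, Rabs (f (- Z.of_nat (S k))%Z) <= C * ((INR k + 1) ^ 2 * x ^ k)) -> ex_sumZ f.
Proof.
  intros Hx Hp Hn.
  pose proof (@ex_series_scal_l R_AbsRing R_NormedModule C _ (ex_series_sq_geometric x Hx)) as Hdom.
  split; (eapply (@ex_series_le R_AbsRing R_CompleteNormedModule); [|exact Hdom]); auto.
Qed.

Lemma sumZ_supported_at_0 f : (forall d, d <> 0%Z -> f d = 0) -> ex_sumZ f /\ sumZ f = f 0%Z.
Proof.
  intros H.
  assert (Hbound : forall k, 0 <= Rabs (f 0%Z) * ((INR k + 1) ^ 2 * (1 / 2) ^ k)).
  { intros k; pose proof (pos_INR k); apply Rmult_le_pos; [apply Rabs_pos|].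
    apply Rmult_le_pos; apply pow_le; lra. }
  assert (Hex : ex_sumZ f).
  { apply ex_sumZ_dominated with (Rabs (f 0%Z)) (1 / 2); [lra| |].
    - intros [|k]; [simpl; lra|rewrite H, Rabs_R0 by lia; apply Hbound].
    - intros k; rewrite H, Rabs_R0 by lia; apply Hbound. }
  split; [exact Hex|]; destruct Hex as [Hp _]; unfold sumZ.
  rewrite (Series_incr_1 _ Hp).
  rewrite (Series_ext (fun k => f (Z.of_nat (S k))) (fun _ => 0 * 0))
    by (intros; rewrite H; [ring|lia]).
  rewrite (Series_ext (fun k => f (- Z.of_nat (S k))%Z) (fun _ => 0 * 0))
    by (intros; rewrite H; [ring|lia]).
  rewrite Series_scal_l; simpl; ring.
Qed.

Lemma Rabs_pow_le_sq y m p : (p <= 2)%nat -> Rabs y <= m -> 1 <= m -> Rabs (y ^ p) <= m ^ 2.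
Proof.
  intros Hp Hy Hm; rewrite <- RPow_abs; pose proof (Rabs_pos y).
  destruct p as [|[|[|p]]]; simpl; try lia; nra.
Qed.

Lemma Rabs_moment_le p F d B m : (p <= 2)%nat -> 0 <= F d <= B -> Rabs (IZR d) <= m -> 1 <= m ->
  Rabs (moment p F d) <= B * m ^ 2.
Proof.
  intros Hp HF Hd Hm; unfold moment; rewrite Rabs_mult, (Rabs_pos_eq (F d)) by lra.
  pose proof (Rabs_pow_le_sq (IZR d) m p Hp Hd Hm); pose proof (Rabs_pos (IZR d ^ p)).
  nra.
Qed.

Lemma pow_one_minus_ge n t : 0 <= t <= 1 -> 1 - INR n * t <= (1 - t) ^ n.
Proof.
  intros Ht; induction n as [|n IH]; [simpl; lra|].
  rewrite S_INR; simpl; pose proof (pos_INR n); nra.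
Qed.

Lemma mu_0_has_moments b : has_moments (mu b 0) 1 0 0.
Proof.
  assert (Hsupp : forall k d, d <> 0%Z -> moment k (mu b 0) d = 0).
  { intros k d Hd; unfold moment; rewrite mu_0; destruct (Z.eqb_spec d 0); [lia|ring]. }
  destruct (sumZ_supported_at_0 _ (Hsupp 0%nat)) as [H0 S0].
  destruct (sumZ_supported_at_0 _ (Hsupp 1%nat)) as [H1 S1].
  destruct (sumZ_supported_at_0 _ (Hsupp 2%nat)) as [H2 S2].
  constructor; auto; [rewrite S0|rewrite S1|rewrite S2]; unfold moment; rewrite mu_0; simpl; ring.
Qed.

Section Moments.

Variable b : nat.
Hypothesis Hb : (2 <= b)%nat.

Lemma INR_b_ge_2 : 2 <= INR b.
Proof. replace 2 with (INR 2) by reflexivity; apply le_INR; lia. Qed.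

Lemma mu_1_digit d :
  mu b 1 d = INR (b - 1) / INR b * mu b 0 (d - 1) + 1 / INR b * mu b 1 (d - (1 - Z.of_nat b)).
Proof.
  pose proof (mu_digit b 0 1 d Hb ltac:(lia)) as E; rewrite Nat.mul_0_r in E; exact E.
Qed.

(* Ratio of the geometric left tail of [mu b 1]: a step of [b - 1] to the left costs a factor [1 / b],
   and [b * q ^ (b - 1) >= 1] by Bernoulli's inequality. *)
Let q := (INR b - 1) / INR b.

Lemma q_range : 0 < q < 1.
Proof.
  pose proof INR_b_ge_2; unfold q; split; [apply Rdiv_lt_0_compat; lra|].
  apply Rmult_lt_reg_r with (INR b); [lra|]; field_simplify; lra.
Qed.

Lemma b_mul_q_pow_ge_1 : 1 <= INR b * q ^ (b - 1).
Proof.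
  pose proof INR_b_ge_2.
  assert (Ht : 0 <= / INR b <= 1)
    by (split; [left; apply Rinv_0_lt_compat; lra|rewrite <- Rinv_1; apply Rinv_le_contravar; lra]).
  pose proof (pow_one_minus_ge (b - 1) (/ INR b) Ht) as Hbern.
  replace (1 - / INR b) with q in Hbern by (unfold q; field; lra).
  rewrite minus_INR in Hbern by lia; simpl INR in Hbern.
  replace (1 - (INR b - 1) * / INR b) with (/ INR b) in Hbern by (field; lra).
  apply Rmult_le_reg_l with (/ INR b); [apply Rinv_0_lt_compat; lra|].
  rewrite <- Rmult_assoc, Rinv_l, Rmult_1_l, Rmult_1_r by lra; exact Hbern.
Qed.

Lemma mu_1_left_tail j : mu b 1 (1 - Z.of_nat j) <= INR b * q ^ j.
Proof.
  pose proof INR_b_ge_2; pose proof q_range; pose proof b_mul_q_pow_ge_1.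
  induction j as [j IH] using lt_wf_ind.
  assert (Hqj : 0 <= q ^ j) by (apply pow_le; lra).
  destruct (Nat.eq_dec j 0) as [->|Hj]; [simpl; pose proof (mu_bounds b 1 1 Hb); lra|].
  rewrite mu_1_digit, mu_0; destruct (Z.eqb_spec (1 - Z.of_nat j - 1) 0); [lia|].
  rewrite Rmult_0_r, Rplus_0_l.
  destruct (Nat.lt_ge_cases j (b - 1)) as [Hlt|Hge].
  - rewrite mu_gt by lia; nra.
  - replace (1 - Z.of_nat j - (1 - Z.of_nat b))%Z with (1 - Z.of_nat (j - (b - 1)))%Z by lia.
    specialize (IH (j - (b - 1))%nat ltac:(lia)).
    replace (q ^ j) with (q ^ (j - (b - 1)) * q ^ (b - 1)) by (rewrite <- pow_add; f_equal; lia).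
    assert (0 <= q ^ (j - (b - 1))) by (apply pow_le; lra).
    apply Rle_trans with (q ^ (j - (b - 1))); [|nra].
    apply Rmult_le_reg_l with (INR b); [lra|].
    replace (INR b * (1 / INR b * mu b 1 (1 - Z.of_nat (j - (b - 1)))))
      with (mu b 1 (1 - Z.of_nat (j - (b - 1)))) by (field; lra).
    exact IH.
Qed.

Lemma mu_1_nonneg_le k : mu b 1 (Z.of_nat k) <= INR b * q ^ k.
Proof.
  pose proof INR_b_ge_2; pose proof q_range.
  destruct k as [|[|k]].
  - simpl; pose proof (mu_bounds b 1 0 Hb); lra.
  - assert (INR b * q = INR b - 1) by (unfold q; field; lra).
    simpl; rewrite Rmult_1_r; pose proof (mu_bounds b 1 1 Hb); lra.
  - rewrite mu_gt by lia; apply Rmult_le_pos; [lra|apply pow_le; lra].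
Qed.

Lemma mu_1_neg_le k : mu b 1 (- Z.of_nat (S k))%Z <= INR b * q ^ k.
Proof.
  pose proof INR_b_ge_2; pose proof q_range.
  replace (- Z.of_nat (S k))%Z with (1 - Z.of_nat (k + 2))%Z by lia.
  eapply Rle_trans; [apply mu_1_left_tail|].
  rewrite pow_add; assert (0 <= q ^ k) by (apply pow_le; lra).
  apply Rmult_le_compat_l; [lra|].
  rewrite <- (Rmult_1_r (q ^ k)) at 2; apply Rmult_le_compat_l; [lra|]; simpl; nra.
Qed.

Lemma ex_sumZ_moment_mu_1 p : (p <= 2)%nat -> ex_sumZ (moment p (mu b 1)).
Proof.
  intros Hp; pose proof q_range; apply ex_sumZ_dominated with (INR b) q; auto.
  - intros k; pose proof (pos_INR k); pose proof (mu_bounds b 1 (Z.of_nat k) Hb).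
    eapply Rle_trans.
    + apply Rabs_moment_le with (B := INR b * q ^ k) (m := INR k + 1); auto; try lra.
      * split; [lra|apply mu_1_nonneg_le].
      * rewrite <- INR_IZR_INZ, Rabs_pos_eq; lra.
    + right; ring.
  - intros k; pose proof (pos_INR k); pose proof (mu_bounds b 1 (- Z.of_nat (S k))%Z Hb).
    eapply Rle_trans.
    + apply Rabs_moment_le with (B := INR b * q ^ k) (m := INR k + 1); auto; try lra.
      * split; [lra|apply mu_1_neg_le].
      * rewrite opp_IZR, Rabs_Ropp, <- INR_IZR_INZ, S_INR, Rabs_pos_eq; lra.
    + right; ring.
Qed.

(* Mass and mean of [mu b 1] are forced by its own mixture equation, whose fixed point is unique. *)
Lemma mu_1_has_moments : exists m2, has_moments (mu b 1) 1 0 m2.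
Proof.
  pose proof INR_b_ge_2.
  set (m0 := sumZ (moment 0 (mu b 1))); set (m1 := sumZ (moment 1 (mu b 1))).
  assert (M : has_moments (mu b 1) m0 m1 (sumZ (moment 2 (mu b 1))))
    by (constructor; auto; apply ex_sumZ_moment_mu_1; lia).
  pose proof (has_moments_mixture _ _ _ _ _ _ _ _ _ _ _ _ _ mu_1_digit (mu_0_has_moments b) M) as M'.
  destruct (has_moments_unique _ _ _ _ _ _ _ M M') as [E0 [E1 _]].
  rewrite minus_INR, minus_IZR, <- INR_IZR_INZ in * by lia; simpl INR in *; simpl IZR in *.
  assert (Hm0 : m0 = 1).
  { assert (Q : m0 * INR b = INR b - 1 + m0) by (rewrite E0 at 1; field; lra).
    assert (Q' : (m0 - 1) * (INR b - 1) = 0) by nra.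
    apply Rmult_integral in Q'; destruct Q'; lra. }
  assert (Hm1 : m1 = 0).
  { rewrite Hm0 in E1.
    assert (Q : m1 * INR b = INR b - 1 + m1 + (1 - INR b)) by (rewrite E1 at 1; field; lra).
    assert (Q' : m1 * (INR b - 1) = 0) by nra.
    apply Rmult_integral in Q'; destruct Q'; lra. }
  rewrite <- Hm0, <- Hm1; eexists; exact M.
Qed.

Lemma mu_has_moments r : exists m2, has_moments (mu b r) 1 0 m2.
Proof.
  pose proof INR_b_ge_2.
  induction r as [r IH] using lt_wf_ind.
  destruct (Nat.eq_dec r 0) as [->|Hr0]; [exists 0; apply mu_0_has_moments|].
  destruct (Nat.eq_dec r 1) as [->|Hr1]; [apply mu_1_has_moments|].
  pose proof (Nat.div_mod r b ltac:(lia)) as Hdm.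
  assert (Hr0b : (r mod b < b)%nat) by (apply Nat.mod_upper_bound; lia).
  set (rt := (r / b)%nat) in *; set (r0 := (r mod b)%nat) in *.
  destruct (IH rt ltac:(nia)) as [g M1].
  destruct (Nat.eq_dec r0 0) as [Hz|Hz].
  - exists g; eapply has_moments_ext; [|exact M1]; intros d.
    rewrite Hdm, mu_digit, Hz, Nat.sub_0_r by lia; simpl INR.
    replace (d - Z.of_nat 0)%Z with d by lia; field; lra.
  - destruct (IH (rt + 1)%nat ltac:(nia)) as [h M2].
    pose proof (has_moments_mixture _ _ _ _ _ _ _ _ _ _ _ _ _
                  (fun d => mu_digit b rt r0 d Hb Hr0b) M1 M2) as M.
    rewrite <- Hdm in M; eexists.
    replace 1 with (INR (b - r0) / INR b * 1 + INR r0 / INR b * 1)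
      by (rewrite minus_INR by lia; field; lra).
    replace 0 with (INR (b - r0) / INR b * (0 + IZR (Z.of_nat r0) * 1)
                    + INR r0 / INR b * (0 + IZR (Z.of_nat r0 - Z.of_nat b) * 1))
      by (rewrite minus_INR, minus_IZR, <- !INR_IZR_INZ by lia; field; lra).
    exact M.
Qed.

End Moments.

Lemma Var_mu_has_moments b r m2 : has_moments (mu b r) 1 0 m2 -> Var_mu b r = m2.
Proof.
  intros [_ _ _ _ S1 S2]; unfold Var_mu, mean_mu.
  rewrite (sumZ_ext (fun d => IZR d * mu b r d) (moment 1 (mu b r))) by (intros; unfold moment; ring).
  rewrite S1, <- S2; apply sumZ_ext; intros; unfold moment; ring.
Qed.

Theorem mainTheorem10 (b : nat) (Hb : (2 <= b)%nat) (rt r0 : nat) (Hr0 : (r0 < b)%nat) :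
  Var_mu b (b * rt + r0) =
    INR (b - r0) / INR b * Var_mu b rt
    + INR r0 / INR b * Var_mu b (rt + 1)
    + INR r0 * INR (b - r0).
Proof.
  pose proof (INR_b_ge_2 b Hb).
  destruct (mu_has_moments b Hb rt) as [g Mrt].
  destruct (mu_has_moments b Hb (rt + 1)) as [h Mrt1].
  destruct (mu_has_moments b Hb (b * rt + r0)) as [s Mr].
  pose proof (has_moments_mixture _ _ _ _ _ _ _ _ _ _ _ _ _
                (fun d => mu_digit b rt r0 d Hb Hr0) Mrt Mrt1) as Mmix.
  destruct (has_moments_unique _ _ _ _ _ _ _ Mr Mmix) as [_ [_ ->]].
  rewrite (Var_mu_has_moments _ _ _ Mr), (Var_mu_has_moments _ _ _ Mrt),
    (Var_mu_has_moments _ _ _ Mrt1).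
  rewrite minus_INR, minus_IZR, <- !INR_IZR_INZ by lia; field; lra.
Qed.
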